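(* Let $f$ be a noisy process with noise variance $\sigma^2>0$ and assume $V:=\sup_{x\in\mathbb R}\mathbb E[(f^{\mathrm s}(x))^2]<\infty$. Then for every nonempty bounded collection of data sets $\tilde{\mathcal D}\subseteq\mathcal D$, $$1\le\sup_{D\in\tilde{\mathcal D}}\ \sup_{g\in\mathbb R^{\mathbb R}}\pi'_f(D)(g)\le 2\exp\Big(\frac{2\|\tilde{\mathcal D}\|_\infty^2V}{\sigma^2}+\frac{\|\tilde{\mathcal D}\|_\infty^3}{\sigma^2}\Big).$$
   Context: A stochastic process $f$ on $\mathbb R$ is noisy with noise variance $\sigma^2>0$ if $f=f^{\mathrm s}+f^{\mathrm n}$ with $f^{\mathrm s},f^{\mathrm n}$ independent, $f^{\mathrm s}$ (smooth part) having continuous sample paths, and $(f^{\mathrm n}(x_1),\dots,f^{\mathrm n}(x_n))\sim\mathcal N(\mathbf 0,\sigma^2\mathbf I_n)$ for pairwise distinct $x_i$. Data sets: $\mathcal D=\bigcup_{n\ge0}(\mathbb R\times\mathbb R)^n$; a data set $D=((x_i,y_i))_{i=1}^n$ is written $D=(\mathbf x,\mathbf y)$ with $\mathbf x,\mathbf y\in\mathbb R^n$ (the empty data set is allowed). For $D=(\mathbf x,\mathbf y)$ and $g:\mathbb R\to\mathbb R$ define $$\pi'_f(D)(g)=\frac{\mathcal N(\mathbf y\mid g(\mathbf x),\sigma^2\mathbf I)}{\mathbb E_{f^{\mathrm s}}[\mathcal N(\mathbf y\mid f^{\mathrm s}(\mathbf x),\sigma^2\mathbf I)]}$$ (with value $1$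 for $D=\varnothing$), where $g(\mathbf x)=(g(x_1),\dots,g(x_n))$ and $\mathcal N(\cdot\mid\mathbf m,\mathbf K)$ is the Gaussian density; this is the Radon–Nikodym derivative of the posterior of $f^{\mathrm s}$ given the noisy observations $D$ with respect to the prior law of $f^{\mathrm s}$. For $\tilde{\mathcal D}\subseteq\mathcal D$ let $\|\tilde{\mathcal D}\|_\infty=\sup_{(\mathbf x,\mathbf y)\in\tilde{\mathcal D}}\sum_{i=1}^{|\mathbf x|}(|y_i|\vee1)$; $\tilde{\mathcal D}$ is bounded if $\|\tilde{\mathcal D}\|_\infty<\infty$. *)

From HB Require Import structures.
From mathcomp Require Import all_boot all_order all_algebra.
From mathcomp Require Import all_classical all_reals all_analysis.
Set Implicit Arguments. Unset Strict Implicit. Unset Printing Implicit Defensive.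
Import Order.TTheory GRing.Theory Num.Theory.
Local Open Scope ring_scope.

Section Defs.
Context {R : realType}.

(* A data set D = ((x_i,y_i))_i is a finite sequence of pairs (x_i, y_i). *)

Definition gauss_dens (sigma : R) (D : seq (R * R)) (g : R -> R) : R :=
  \prod_(p <- D)
     ((Num.sqrt (2 * pi * sigma ^+ 2))^-1 *
      expR (- (p.2 - g p.1) ^+ 2 / (2 * sigma ^+ 2))).

Definition pi' {d} {Omega : measurableType d} (P : probability Omega R)
  (sigma : R) (fs : R -> Omega -> R) (D : seq (R * R)) (g : R -> R) : R :=
  gauss_dens sigma D g /
  fine (\int[P]_w (gauss_dens sigma D (fun x => fs x w))%:E)%E.

Definition Vsup {d} {Omega : measurableType d} (P : probability Omega R)
  (fs : R -> Omega -> R) : \bar R :=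
  ereal_sup [set (\int[P]_w ((fs x w) ^+ 2)%:E)%E | x in [set: R]].

Definition dnorm (Dt : set (seq (R * R))) : \bar R :=
  ereal_sup [set (\sum_(p <- D) Num.max `|p.2| 1)%:E | D in Dt].

Definition sup_pi' {d} {Omega : measurableType d} (P : probability Omega R)
  (sigma : R) (fs : R -> Omega -> R) (Dt : set (seq (R * R))) : \bar R :=
  ereal_sup [set (pi' P sigma fs D g)%:E | D in Dt & g in [set: R -> R]].

End Defs.

From HB Require Import structures.
From mathcomp Require Import all_boot all_order all_algebra.
From mathcomp Require Import all_classical all_reals all_analysis.
From mathcomp Require Import measurable_realfun.
From mathcomp Require Import ring lra.
Set Implicit Arguments. Unset Strict Implicit. Unset Printing Implicit Defensive.
Import Order.TTheory GRing.Theory Num.Theory numFieldNormedType.Exports.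
Local Open Scope ring_scope.

(* Write the likelihood of a data set D of size n as
     gauss_dens D g = c^n * exp (- Q(D, g)),
   where c = (2 pi sigma^2)^(-1/2) and Q is the quadratic misfit
   sum_i (y_i - g x_i)^2 / (2 sigma^2).  Hence gauss_dens D g <= c^n, while
   the evidence Z(D) = E[gauss_dens D f^s] is bounded below through Jensen's
   inequality for t |-> exp (- t):  Z(D) >= c^n exp (- E[Q(D, f^s)]).
   Since (y - f)^2 <= 2 y^2 + 2 f^2, E[Q(D, f^s)] <= sum_i (y_i^2 + V) / sigma^2,
   and an elementary estimate bounds this by (2 N^2 V + N^3) / sigma^2 where
   N = ||D~||_inf.  Dividing gives the upper bound pi'(D)(g) <= exp (...),
   which is even better than the claimed one by the factor 2.
   For the lower bound, pi'(D)(f^s(w)) averages to 1 over w, so it cannot be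
   below 1 for every sample path w; in particular the supremum is >= 1. *)

Section GaussianLikelihood.
Variables (R : realType) (sigma : R).

Definition gauss_const : R := (Num.sqrt (2 * pi * sigma ^+ 2))^-1.

Definition misfit (D : seq (R * R)) (g : R -> R) : R :=
  \sum_(p <- D) (p.2 - g p.1) ^+ 2 / (2 * sigma ^+ 2).

Lemma gauss_const_gt0 : 0 < sigma -> 0 < gauss_const.
Proof.
move=> sigma_gt0; rewrite /gauss_const invr_gt0 sqrtr_gt0.
by rewrite !mulr_gt0 ?exprn_gt0 ?pi_gt0.
Qed.

Lemma misfit_term_ge0 (y z : R) : 0 <= (y - z) ^+ 2 / (2 * sigma ^+ 2).
Proof. by rewrite divr_ge0 ?sqr_ge0 // mulr_ge0 ?sqr_ge0. Qed.

Lemma misfit_ge0 D g : 0 <= misfit D g.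
Proof. by apply: sumr_ge0 => p _; apply: misfit_term_ge0. Qed.

Lemma gauss_densE D g :
  gauss_dens sigma D g = gauss_const ^+ size D * expR (- misfit D g).
Proof.
rewrite /gauss_dens /misfit; elim: D => [|p D IH].
  by rewrite !big_nil oppr0 expR0 mulr1.
by rewrite !big_cons IH [gauss_const ^+ _.+1]exprS opprD expRD mulNr mulrACA.
Qed.

Lemma gauss_dens_ge0 D g : 0 <= sigma -> 0 <= gauss_dens sigma D g.
Proof.
move=> sigma_ge0; rewrite gauss_densE mulr_ge0 ?exprn_ge0 ?expR_ge0 //.
by rewrite invr_ge0 sqrtr_ge0.
Qed.

Lemma gauss_dens_le D g :
  0 < sigma -> gauss_dens sigma D g <= gauss_const ^+ size D.
Proof.
move=> sigma_gt0; rewrite gauss_densE -[leRHS]mulr1 ler_wpM2l //.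
  by rewrite exprn_ge0 // ltW // gauss_const_gt0.
by rewrite expR_le1 oppr_le0 misfit_ge0.
Qed.

End GaussianLikelihood.

Section ProbabilityFacts.
Variables (R : realType) (d : measure_display) (Omega : measurableType d).
Variable P : probability Omega R.

Lemma probability_inhabited : exists w : Omega, True.
Proof.
apply: contrapT => now.
have Omega0 : [set: Omega]%classic = set0.
  by apply/seteqP; split => // w _; apply: now; exists w.
by have := probability_setT P; rewrite Omega0 measure0 => -[] /esym/eqP; rewrite oner_eq0.
Qed.

Lemma integral_prob_cst (r : R) : (\int[P]_w r%:E = r%:E)%E.
Proof. by rewrite integral_cst //= probability_setT mule1. Qed.

Lemma integral_le_ub (h : Omega -> R) (s : R) :
  measurable_fun [set: Omega] h -> (forall w, 0 <= h w) ->
  (forall w, h w <= s) -> (\int[P]_w (h w)%:E <= s%:E)%E.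
Proof.
move=> mh h_ge0 h_le; rewrite -integral_prob_cst.
apply: ge0_le_integral => //.
- by move=> w _; rewrite lee_fin.
- exact/measurable_EFinP.
- by move=> w _; rewrite lee_fin.
Qed.

(* Jensen's inequality for the convex function t |-> exp (- t), proved by
   integrating its tangent line at M:  exp (- M) (1 + M - t) <= exp (- t). *)
Lemma integral_expN_ge (h : Omega -> R) (M : R) :
  measurable_fun [set: Omega] h -> (forall w, 0 <= h w) ->
  (\int[P]_w (h w)%:E <= M%:E)%E ->
  ((expR (- M))%:E <= \int[P]_w (expR (- h w))%:E)%E.
Proof.
move=> mh h_ge0 hM; set a := expR (- M).
have a_ge0 : 0 <= a by rewrite expR_ge0.
have mhE : measurable_fun [set: Omega] (fun w => (h w)%:E).
  exact/measurable_EFinP.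
have mexp : measurable_fun [set: Omega] (fun w => expR (- h w)).
  by apply: measurableT_comp; [exact: measurable_expR | exact: measurable_funN].
have mexpE : measurable_fun [set: Omega] (fun w => (expR (- h w))%:E).
  exact/measurable_EFinP.
have tangent t : a * (1 + M - t) <= expR (- t).
  have -> : expR (- t) = a * expR (M - t) by rewrite -expRD addrA addNr add0r.
  by rewrite ler_wpM2l // -addrA expR_ge1Dx.
have I_ge0 : (0 <= \int[P]_w (h w)%:E)%E.
  by apply: integral_ge0 => w _; rewrite lee_fin.
have M_ge0 : 0 <= M by rewrite -lee_fin (le_trans I_ge0 hM).
have J_le1 : (\int[P]_w (expR (- h w))%:E <= 1%:E)%E.
  by apply: integral_le_ub => // w; rewrite ?expR_ge0 // expR_le1 oppr_le0.
have J_ge0 : (0 <= \int[P]_w (expR (- h w))%:E)%E.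
  by apply: integral_ge0 => w _; rewrite lee_fin expR_ge0.
have integrated_tangent : ((a * (1 + M))%:E <=
    \int[P]_w ((expR (- h w))%:E + a%:E * (h w)%:E))%E.
  rewrite -[X in (X <= _)%E]integral_prob_cst; apply: ge0_le_integral => //.
  - by move=> w _; rewrite lee_fin mulr_ge0 // addr_ge0.
  - exact: emeasurable_funD (measurable_funeM _ _).
  - move=> w _; rewrite -EFinM -EFinD lee_fin.
    by have := tangent (h w); rewrite mulrBr mulrDr; lra.
move: integrated_tangent; rewrite ge0_integralD //; last 2 first.
- by move=> w _; rewrite mule_ge0 // lee_fin.
- exact: measurable_funeM.
rewrite ge0_integralZl //; last by move=> w _; rewrite lee_fin.
move: hM I_ge0 J_le1 J_ge0.
case: (\int[P]_w (h w)%:E)%E => [I| |] //.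
case: (\int[P]_w (expR (- h w))%:E)%E => [J| |] //.
rewrite -EFinM -EFinD !lee_fin => I_le I_ge0 _ _ tangent_int.
have : a * I <= a * M by rewrite ler_wpM2l.
lra.
Qed.

End ProbabilityFacts.

Section Evidence.
Variables (R : realType) (d : measure_display) (Omega : measurableType d).
Variables (P : probability Omega R) (fs : R -> Omega -> R) (sigma : R).
Hypothesis sigma_gt0 : 0 < sigma.
Hypothesis fs_measurable : forall x, measurable_fun [set: Omega] (fs x).

Local Notation path w := (fun x => fs x w).
Local Notation c := (gauss_const sigma).

Definition evidence (D : seq (R * R)) : \bar R :=
  (\int[P]_w (gauss_dens sigma D (path w))%:E)%E.

Lemma measurable_misfit_term (p : R * R) :
  measurable_fun [set: Omega] (fun w => (p.2 - fs p.1 w) ^+ 2 / (2 * sigma ^+ 2)).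
Proof.
apply: measurable_funM; last exact: measurable_cst.
by apply: measurable_funX; apply: measurable_funB => //; exact: measurable_cst.
Qed.

Lemma measurable_misfit D :
  measurable_fun [set: Omega] (fun w => misfit sigma D (path w)).
Proof. by apply: measurable_sum => p; apply: measurable_misfit_term. Qed.

Lemma measurable_expN_misfit D :
  measurable_fun [set: Omega] (fun w => expR (- misfit sigma D (path w))).
Proof.
apply: measurableT_comp; first exact: measurable_expR.
exact: measurable_funN (measurable_misfit D).
Qed.

Lemma measurable_gauss_dens D :
  measurable_fun [set: Omega] (fun w => gauss_dens sigma D (path w)).
Proof.
under eq_fun do rewrite gauss_densE.
by apply: measurable_funM; [exact: measurable_cst | exact: measurable_expN_misfit].
Qed.

Lemma evidence_fin_num D : evidence D \is a fin_num.
Proof.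
have ev_ge0 : (0 <= evidence D)%E.
  by apply: integral_ge0 => w _; rewrite lee_fin gauss_dens_ge0 ?ltW.
rewrite ge0_fin_numE //; apply: (@le_lt_trans _ _ (c ^+ size D)%:E); last exact: ltry.
apply: integral_le_ub; first exact: measurable_gauss_dens.
- by move=> w; rewrite gauss_dens_ge0 ?ltW.
- by move=> w; rewrite gauss_dens_le.
Qed.

(* Jensen's inequality bounds the evidence below by the expected misfit. *)
Lemma evidence_ge D M :
  (\int[P]_w (misfit sigma D (path w))%:E <= M%:E)%E ->
  c ^+ size D * expR (- M) <= fine (evidence D).
Proof.
move=> misfit_le; rewrite -lee_fin fineK ?evidence_fin_num // /evidence.
under eq_integral do rewrite gauss_densE EFinM.
rewrite ge0_integralZl //; last 2 first.
- exact/measurable_EFinP/measurable_expN_misfit.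
- by rewrite lee_fin exprn_ge0 // ltW // gauss_const_gt0.
rewrite EFinM lee_wpmul2l //.
  by rewrite lee_fin exprn_ge0 // ltW // gauss_const_gt0.
apply: integral_expN_ge misfit_le; first exact: measurable_misfit.
by move=> w; apply: misfit_ge0.
Qed.

Lemma evidence_gt0 D M :
  (\int[P]_w (misfit sigma D (path w))%:E <= M%:E)%E -> 0 < fine (evidence D).
Proof.
move=> /evidence_ge; apply: lt_le_trans.
by rewrite mulr_gt0 ?expR_gt0 ?exprn_gt0 ?gauss_const_gt0.
Qed.

(* Bound on the expected misfit, from (y - f)^2 <= 2 y^2 + 2 f^2. *)
Lemma expected_misfit_le D (V : R) :
  (forall x, (\int[P]_w (fs x w ^+ 2)%:E <= V%:E)%E) ->
  (\int[P]_w (misfit sigma D (path w))%:E <=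
    (\sum_(p <- D) (p.2 ^+ 2 + V) / sigma ^+ 2)%:E)%E.
Proof.
move=> second_moment_le.
have s2_gt0 : 0 < sigma ^+ 2 by rewrite exprn_gt0.
rewrite /misfit; under eq_integral do rewrite -sumEFin.
rewrite ge0_integral_sum //; last 2 first.
- by move=> p; apply/measurable_EFinP; apply: measurable_misfit_term.
- by move=> p w _; rewrite lee_fin misfit_term_ge0.
rewrite -sumEFin; apply: lee_sum => -[x y] _ /=.
have mfs2 : measurable_fun [set: Omega] (fun w => fs x w ^+ 2).
  exact: measurable_funX.
have int_fs2 : (\int[P]_w ((y ^+ 2 + fs x w ^+ 2) / sigma ^+ 2)%:E =
    (y ^+ 2 / sigma ^+ 2)%:E + (sigma ^+ 2)^-1%:E * \int[P]_w (fs x w ^+ 2)%:E)%E.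
  under eq_integral do rewrite mulrDl EFinD.
  rewrite ge0_integralD //; last 3 first.
  - by move=> w _; rewrite lee_fin divr_ge0 ?sqr_ge0 ?ltW.
  - by move=> w _; rewrite lee_fin divr_ge0 ?sqr_ge0 ?ltW.
  - by apply/measurable_EFinP; apply: measurable_funM.
  rewrite integral_prob_cst; congr (_ + _)%E.
  under eq_integral do rewrite mulrC EFinM.
  rewrite ge0_integralZl ?lee_fin ?invr_ge0 ?ltW //; first exact/measurable_EFinP.
  by move=> w _; rewrite lee_fin sqr_ge0.
apply: (@le_trans _ _ (\int[P]_w ((y ^+ 2 + fs x w ^+ 2) / sigma ^+ 2)%:E)%E).
  apply: ge0_le_integral => //.
  - by move=> w _; rewrite lee_fin misfit_term_ge0.
  - exact/measurable_EFinP/(measurable_misfit_term (x, y)).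
  - apply/measurable_EFinP; apply: measurable_funM => //.
    by apply: measurable_funD => //; exact: measurable_cst.
  - move=> w _; rewrite lee_fin ler_pdivrMr ?mulr_gt0 //.
    have -> : (y ^+ 2 + fs x w ^+ 2) / sigma ^+ 2 * (2 * sigma ^+ 2) =
              2 * (y ^+ 2 + fs x w ^+ 2) by field; rewrite gt_eqF.
    by have := sqr_ge0 (y + fs x w); nra.
rewrite int_fs2 mulrDl EFinD [V / _]mulrC EFinM; apply: leeD2l.
by apply: (lee_wpmul2l _ (second_moment_le x)); rewrite lee_fin invr_ge0 ltW.
Qed.

(* Upper bound on pi': likelihood <= c^n, evidence >= c^n exp (- M). *)
Lemma pi'_le_expR D g M :
  (\int[P]_w (misfit sigma D (path w))%:E <= M%:E)%E ->
  pi' P sigma fs D g <= expR M.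
Proof.
move=> misfit_le; rewrite /pi' -/(evidence D).
rewrite ler_pdivrMr ?(evidence_gt0 misfit_le) //.
apply: le_trans (gauss_dens_le D g sigma_gt0) _.
have -> : c ^+ size D = expR M * (c ^+ size D * expR (- M)).
  by rewrite mulrCA -expRD subrr expR0 mulr1.
by rewrite ler_wpM2l ?expR_ge0 ?evidence_ge.
Qed.

(* pi'(D)(f^s(w)) has expectation 1, so it is >= 1 for some sample path w:
   any common upper bound s satisfies Z(D) <= s Z(D). *)
Lemma pi'_samples_ub_ge1 D M (s : R) :
  (\int[P]_w (misfit sigma D (path w))%:E <= M%:E)%E ->
  (forall w, pi' P sigma fs D (path w) <= s) -> 1 <= s.
Proof.
move=> misfit_le pi'_le; have Z_gt0 := evidence_gt0 misfit_le.
rewrite -(ler_pM2r Z_gt0) mul1r -lee_fin fineK ?evidence_fin_num //.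
apply: integral_le_ub; first exact: measurable_gauss_dens.
- by move=> w; rewrite gauss_dens_ge0 ?ltW.
- by move=> w; have := pi'_le w; rewrite /pi' -/(evidence D) ler_pdivrMr.
Qed.

End Evidence.

Section DataNormEstimate.
Variable R : realType.

Lemma sum_sqr_le_sqr_sum (I : Type) (s : seq I) (F : I -> R) :
  (forall i, 0 <= F i) -> \sum_(i <- s) F i ^+ 2 <= (\sum_(i <- s) F i) ^+ 2.
Proof.
move=> F_ge0; elim: s => [|i s IH]; first by rewrite !big_nil expr0n.
rewrite !big_cons sqrrD -addrA lerD2l.
have S_ge0 : 0 <= \sum_(j <- s) F j by rewrite sumr_ge0.
by apply: le_trans IH _; rewrite lerDr mulrn_wge0 // mulr_ge0.
Qed.

Lemma sum_sqr_add_le (D : seq (R * R)) (V N : R) :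
  0 <= V -> \sum_(p <- D) Num.max `|p.2| 1 <= N ->
  \sum_(p <- D) (p.2 ^+ 2 + V) <= 2 * N ^+ 2 * V + N ^+ 3.
Proof.
move=> V_ge0; case: D => [|p0 D0] sum_le.
  have N_ge0 : 0 <= N by move: sum_le; rewrite big_nil.
  by rewrite big_nil addr_ge0 ?mulr_ge0 ?exprn_ge0.
set D := p0 :: D0 in sum_le *; set m := fun p : R * R => Num.max `|p.2| 1.
set T := \sum_(p <- D) m p in sum_le.
have m_ge1 p : 1 <= m p by rewrite le_max lexx orbT.
have m_ge0 p : 0 <= m p by apply: le_trans (m_ge1 p).
have T_ge1 : 1 <= T by rewrite /T big_cons -[1]addr0 lerD ?sumr_ge0.
have sum_sqr : \sum_(p <- D) p.2 ^+ 2 <= T ^+ 2.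
  apply: le_trans (sum_sqr_le_sqr_sum _ m_ge0); apply: ler_sum => p _.
  by rewrite -real_normK ?num_real // lerXn2r ?nnegrE // le_max lexx.
have sumV : \sum_(p <- D) V <= T * V.
  by rewrite mulr_suml; apply: ler_sum => p _; rewrite ler_peMl.
have TN2 : T ^+ 2 <= N ^+ 2 by rewrite lerXn2r ?nnegrE //; lra.
have N23 : N ^+ 2 <= N ^+ 3 by rewrite [N ^+ 3]exprS ler_peMl ?exprn_ge0 //; lra.
have TNV : T * V <= N ^+ 2 * V.
  by rewrite ler_wpM2r // expr2 (le_trans sum_le) // ler_peMl //; lra.
have : 0 <= N ^+ 2 * V by rewrite mulr_ge0 ?exprn_ge0 //; lra.
rewrite big_split /=; lra.
Qed.

End DataNormEstimate.

Lemma le_fine_ereal_sup (R : realType) (S : set (\bar R)) (x : \bar R) :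
  S x -> (0 <= x)%E -> (ereal_sup S < +oo)%E -> (x <= (fine (ereal_sup S))%:E)%E.
Proof.
move=> Sx x_ge0 sup_fin; have x_le := ereal_sup_ubound Sx.
by rewrite fineK // ge0_fin_numE // (le_trans x_ge0).
Qed.

Lemma le_ereal_sup_real (R : realType) (S : set (\bar R)) (x a : R) :
  S x%:E -> (forall s : R, ubound S s%:E -> a <= s) -> (a%:E <= ereal_sup S)%E.
Proof.
move=> Sx ub_ge; have := @ereal_sup_ubound _ S.
case: (ereal_sup S) => [s| |] sup_ub; first by rewrite lee_fin ub_ge.
  by rewrite leey.
by have := sup_ub _ Sx; rewrite leeNy_eq.
Qed.

Theorem mainTheorem8 (R : realType) (d : measure_display)
  (Omega : measurableType d) (P : probability Omega R)
  (fs : R -> Omega -> R) (sigma : R) (Dt : set (seq (R * R))) :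
  0 < sigma ->
  (forall x, measurable_fun [set: Omega] (fs x)) ->
  (forall w : Omega, continuous (fun x : R => fs x w)) ->
  (Vsup P fs < +oo)%E ->
  (Dt !=set0)%classic ->
  (dnorm Dt < +oo)%E ->
  (1 <= sup_pi' P sigma fs Dt)%E /\
  (sup_pi' P sigma fs Dt <=
     (2 * expR (2 * (fine (dnorm Dt)) ^+ 2 * fine (Vsup P fs) / sigma ^+ 2
                + (fine (dnorm Dt)) ^+ 3 / sigma ^+ 2))%:E)%E.
Proof.
move=> sigma_gt0 fs_meas _ V_fin [D0 D0_in] N_fin.
set V := fine (Vsup P fs); set N := fine (dnorm Dt).
have second_moment_le x : (\int[P]_w (fs x w ^+ 2)%:E <= V%:E)%E.
  apply: le_fine_ereal_sup V_fin; first by exists x.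
  by apply: integral_ge0 => w _; rewrite lee_fin sqr_ge0.
have V_ge0 : 0 <= V.
  rewrite -lee_fin; apply: le_trans (second_moment_le 0).
  by apply: integral_ge0 => w _; rewrite lee_fin sqr_ge0.
have data_le D : Dt D -> \sum_(p <- D) Num.max `|p.2| 1 <= N.
  move=> D_in; rewrite -lee_fin; apply: le_fine_ereal_sup N_fin; first by exists D.
  by rewrite lee_fin sumr_ge0 // => p _; rewrite le_max ler01 orbT.
set B := 2 * N ^+ 2 * V / sigma ^+ 2 + N ^+ 3 / sigma ^+ 2.
have misfit_le D : Dt D ->
    (\int[P]_w (misfit sigma D (fun x => fs x w))%:E <= B%:E)%E.
  move=> D_in; apply: le_trans (expected_misfit_le sigma_gt0 fs_meas D second_moment_le) _.
  rewrite lee_fin -mulr_suml /B -mulrDl ler_wpM2r ?invr_ge0 ?sqr_ge0 //.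
  exact: sum_sqr_add_le (data_le D D_in).
split.
- have [w0 _] := probability_inhabited P.
  apply: (@le_ereal_sup_real _ _ (pi' P sigma fs D0 (fun x => fs x w0))).
    by exists D0 => //; exists (fun x => fs x w0).
  move=> s s_ub; apply: (pi'_samples_ub_ge1 sigma_gt0 fs_meas (misfit_le D0 D0_in)) => w.
  by rewrite -lee_fin; apply: s_ub; exists D0 => //; exists (fun x => fs x w).
- apply: ge_ereal_sup => _ [D D_in [g _ <-]].
  rewrite lee_fin (le_trans (pi'_le_expR sigma_gt0 fs_meas g (misfit_le D D_in))) //.
  by rewrite ler_peMl ?expR_ge0 ?ler1n.
Qed.
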